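(* Let $\tau$ be a finite topology on $X$ and let $H=G_1(\tau)$. If distinct $u,v\in X$ are $T_i$-adjacent for some $i\in\{1,2,3',3'',4\}$, then $\mathrm{dist}_H(u,v)\le i$, where $3'$ and $3''$ are read as $3$.
   Context: A finite topology $\tau$ on a finite set $X$ is a family of subsets containing $\emptyset,X$ and closed under unions and intersections. For $A\subseteq X$, $m_\tau(A)$ is the intersection of all open sets containing $A$, $m_\tau(x)=m_\tau(\{x\})$; $\ell_\tau(x)=X\setminus\bigcup\{U\in\tau:x\notin U\}$ and $m_\tau(\ell(x))=m_\tau(\ell_\tau(x))$. Distinct $x,y$ are $T_1$-adjacent if $m_\tau(x)\subseteq m_\tau(y)$ or $m_\tau(y)\subseteq m_\tau(x)$; $T_2$-adjacent if $m_\tau(x)\cap m_\tau(y)\ne\emptyset$; $T_{3'}$-adjacent if $m_\tau(x)\cap m_\tau(\ell(y))\ne\emptyset$ and $m_\tau(\ell(x))\cap m_\tau(y)\ne\emptyset$; $T_{3''}$-adjacent if the same with ''or''; $T_4$-adjacent if $m_\tau(\ell(x))\cap m_\tau(\ell(y))\ne\emptyset$. $G_1(\tau)$ is the simple graph on $X$ in which distinct $x,y$ are adjacent iff they are $T_1$-adjacent. $\mathrm{dist}_H$ is graph distance in $H$. *)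

From mathcomp Require Import all_boot.
Set Implicit Arguments. Unset Strict Implicit. Unset Printing Implicit Defensive.

(* A finite topology on the finite set T (the whole type plays the role of X):
   contains the empty set and X, closed under (arbitrary, hence finite) unions
   and intersections. *)
Definition is_finite_topology (T : finType) (tau : {set {set T}}) : Prop :=
  [/\ set0 \in tau, [set: T] \in tau,
      (forall F : {set {set T}}, F \subset tau -> \bigcup_(U in F) U \in tau)
    & (forall F : {set {set T}}, F \subset tau -> \bigcap_(U in F) U \in tau)].

Definition mA (T : finType) (tau : {set {set T}}) (A : {set T}) : {set T} :=
  \bigcap_(U in tau | A \subset U) U.

Definition mx (T : finType) (tau : {set {set T}}) (x : T) : {set T} :=
  mA tau [set x].

Definition ell (T : finType) (tau : {set {set T}}) (x : T) : {set T} :=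
  ~: \bigcup_(U in tau | x \notin U) U.

Definition mell (T : finType) (tau : {set {set T}}) (x : T) : {set T} :=
  mA tau (ell tau x).

Definition T1_adj (T : finType) (tau : {set {set T}}) (x y : T) : bool :=
  (mx tau x \subset mx tau y) || (mx tau y \subset mx tau x).
Definition T2_adj (T : finType) (tau : {set {set T}}) (x y : T) : bool :=
  mx tau x :&: mx tau y != set0.
Definition T3'_adj (T : finType) (tau : {set {set T}}) (x y : T) : bool :=
  (mx tau x :&: mell tau y != set0) && (mell tau x :&: mx tau y != set0).
Definition T3''_adj (T : finType) (tau : {set {set T}}) (x y : T) : bool :=
  (mx tau x :&: mell tau y != set0) || (mell tau x :&: mx tau y != set0).
Definition T4_adj (T : finType) (tau : {set {set T}}) (x y : T) : bool :=
  mell tau x :&: mell tau y != set0.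

Inductive adj_index := I1 | I2 | I3' | I3'' | I4.

Definition index_val (i : adj_index) : nat :=
  match i with I1 => 1 | I2 => 2 | I3' => 3 | I3'' => 3 | I4 => 4 end.

Definition Ti_adj (i : adj_index) (T : finType) (tau : {set {set T}}) (x y : T)
  : bool :=
  match i with
  | I1 => T1_adj tau x y
  | I2 => T2_adj tau x y
  | I3' => T3'_adj tau x y
  | I3'' => T3''_adj tau x y
  | I4 => T4_adj tau x y
  end.

Definition G1 (T : finType) (tau : {set {set T}}) : rel T :=
  fun x y => (x != y) && T1_adj tau x y.

Definition dist_le (T : finType) (e : rel T) (u v : T) (k : nat) : Prop :=
  exists p : seq T, [/\ size p <= k, path e u p & last u p = v].

From mathcomp Require Import all_boot.
Set Implicit Arguments.

(* Every point z of m(x) satisfies m(z) ⊆ m(x), so z is G_1-adjacent to x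
   (or equal to it); and every z in m(l(x)) lies in some m(y) with x ∈ m(y),
   so z is reached from x in two steps through y.  Each T_i-adjacency of u
   and v provides a point z splitting u, v into two such pieces:
   z ∈ m(u) ∩ m(v) gives 1 + 1, z ∈ m(u) ∩ m(l(v)) gives 1 + 2, and
   z ∈ m(l(u)) ∩ m(l(v)) gives 2 + 2. *)

Section Distance.
Variables (T : finType) (e : rel T).

Lemma dist_le_trans u w v a b :
  dist_le e u w a -> dist_le e w v b -> dist_le e u v (a + b).
Proof.
move=> [p [sp pp lp]] [q [sq pq lq]]; exists (p ++ q); split.
- by rewrite size_cat leq_add.
- by rewrite cat_path pp lp pq.
- by rewrite last_cat lp.
Qed.

Lemma dist_le_sym u v k :
  symmetric e -> dist_le e u v k -> dist_le e v u k.
Proof.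
move=> e_sym [p [sp pp lp]]; exists (rev (belast u p)); split.
- by rewrite size_rev size_belast.
- by rewrite -lp rev_path (eq_path (e' := e)).
- by rewrite -lp; case: p {sp pp lp} => [|x p] //=; rewrite rev_cons last_rcons.
Qed.

End Distance.

Section MinimalOpenSets.
Variables (T : finType) (tau : {set {set T}}).
Hypothesis tau_top : is_finite_topology tau.

Lemma mx_refl x : x \in mx tau x.
Proof. by apply/bigcapP => U /andP[_]; rewrite sub1set. Qed.

Lemma mx_open x : mx tau x \in tau.
Proof.
case: tau_top => _ _ _ capT.
have -> : mx tau x = \bigcap_(U in [set U in tau | [set x] \subset U]) U.
  by apply: eq_bigl => U; rewrite inE.
by apply: capT; apply/subsetP => U; rewrite inE => /andP[].
Qed.

Lemma mx_minimal U x : U \in tau -> x \in U -> mx tau x \subset U.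
Proof. by move=> openU xU; apply/subsetP => z /bigcapP; apply; rewrite openU sub1set. Qed.

Lemma mx_sub z x : z \in mx tau x -> mx tau z \subset mx tau x.
Proof. by move=> zx; apply: mx_minimal => //; apply: mx_open. Qed.

(* m(A) is the open set ⋃_(y ∈ A) m(y). *)
Lemma mem_mA A z : z \in mA tau A -> exists2 y, y \in A & z \in mx tau y.
Proof.
case: tau_top => _ _ cupT _.
set F := [set mx tau y | y in A].
have openF : \bigcup_(U in F) U \in tau.
  by apply: cupT; apply/subsetP => U /imsetP [y _ ->]; apply: mx_open.
move/bigcapP => zF.
have : z \in \bigcup_(U in F) U.
  apply: zF; rewrite openF /=; apply/subsetP => y yA.
  by apply/bigcupP; exists (mx tau y); [apply/imsetP; exists y | apply: mx_refl].
by case/bigcupP => _ /imsetP [y yA ->] zy; exists y.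
Qed.

Lemma mem_ell_mx x y : y \in ell tau x -> x \in mx tau y.
Proof.
rewrite inE => /bigcupP y_notin; apply/negPn/negP => x_notin; apply: y_notin.
by exists (mx tau y); [rewrite mx_open x_notin | apply: mx_refl].
Qed.

Lemma mem_mell x z : z \in mell tau x -> exists2 y, x \in mx tau y & z \in mx tau y.
Proof. by case/mem_mA => y /mem_ell_mx; exists y. Qed.

Lemma G1_sym : symmetric (G1 tau).
Proof. by move=> x y; rewrite /G1 /T1_adj eq_sym orbC. Qed.

Lemma T1_adj_dist1 x y : T1_adj tau x y -> dist_le (G1 tau) x y 1.
Proof.
move=> xy_adj; have [-> | xy] := eqVneq x y; first by exists [::].
by exists [:: y]; rewrite /= /G1 xy xy_adj.
Qed.

Lemma mx_dist1 x z : z \in mx tau x -> dist_le (G1 tau) x z 1.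
Proof. by move/mx_sub => zx; apply: T1_adj_dist1; rewrite /T1_adj zx orbT. Qed.

Lemma mell_dist2 x z : z \in mell tau x -> dist_le (G1 tau) x z 2.
Proof.
case/mem_mell => y xy zy.
apply: (dist_le_trans (a := 1) (b := 1) (w := y)); last exact: mx_dist1.
by apply: dist_le_sym; [apply: G1_sym | apply: mx_dist1].
Qed.

Lemma mx_mell_dist3 u v :
  mx tau u :&: mell tau v != set0 -> dist_le (G1 tau) u v 3.
Proof.
case/set0Pn => z /setIP [zu zv].
apply: (dist_le_trans (a := 1) (b := 2) (w := z)); first exact: mx_dist1.
by apply: dist_le_sym; [apply: G1_sym | apply: mell_dist2].
Qed.

End MinimalOpenSets.

Theorem lemma4p2 (T : finType) (tau : {set {set T}}) (u v : T)
  (i : adj_index) :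
  is_finite_topology tau -> u != v -> Ti_adj i tau u v ->
  dist_le (G1 tau) u v (index_val i).
Proof.
move=> tau_top _; have G1_sym := G1_sym tau.
case: i => /=.
- exact: T1_adj_dist1.
- case/set0Pn => z /setIP [zu zv].
  apply: (dist_le_trans (a := 1) (b := 1) (w := z)); first exact: mx_dist1.
  by apply: dist_le_sym => //; apply: mx_dist1.
- by case/andP => uv _; apply: mx_mell_dist3.
- case/orP => [|vu]; first exact: mx_mell_dist3.
  by rewrite setIC in vu; apply: dist_le_sym => //; apply: mx_mell_dist3.
- case/set0Pn => z /setIP [zu zv].
  apply: (dist_le_trans (a := 2) (b := 2) (w := z)); first exact: mell_dist2.
  by apply: dist_le_sym => //; apply: mell_dist2.
Qed.
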